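(* Let $A\in M_n$ and $c\in\mathbb{R}^n$. If $\alpha$ is a sharp point of $W_c(A)$, then $\alpha$ is a $c$-value of $A$.
   Context: $M_n$ denotes the space of $n\times n$ complex matrices. The $c$-numerical range of $A\in M_n$ is $W_c(A)=\{\sum_{j=1}^n c_jx_j^*Ax_j:\ x_1,\dots,x_n\in\mathbb{C}^n\text{ orthonormal}\}$, a compact convex set. A sharp point of $W_c(A)$ is a point $\alpha\in\partial W_c(A)$ through which pass at least two distinct supporting lines of $W_c(A)$. Let $\lambda_1(A),\dots,\lambda_n(A)$ be the eigenvalues of $A$ with algebraic multiplicity and $i_1<\dots<i_r$ the indices with $c_{i_s}\neq0$. A $c$-value of $A$ is a number $\sum_{s=1}^r c_{i_s}\lambda_{j_s}(A)$ with $j_1,\dots,j_r\in\{1,\dots,n\}$ pairwise distinct. *)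

(* Complex matrices: entries in an arbitrary
   numClosedFieldType C (e.g. algC). *)
From HB Require Import structures.
From mathcomp Require Import all_boot all_order all_algebra.
Set Implicit Arguments. Unset Strict Implicit. Unset Printing Implicit Defensive.
Import Order.TTheory GRing.Theory Num.Theory.
Local Open Scope ring_scope.
Local Open Scope sesquilinear_scope.

Section CNR.
Context {C : numClosedFieldType} {n : nat}.

Definition quadf (A : 'M[C]_n) (x : 'rV[C]_n) : C :=
  ((map_mx Num.conj x) *m A *m x^T) 0 0.

(* An orthonormal family x_1..x_n of C^n = the rows of a unitary matrix. *)
Definition orthonormal_family (X : 'M[C]_n) : Prop := X \is unitarymx.

Definition in_cnr (c : 'rV[C]_n) (A : 'M[C]_n) (z : C) : Prop :=
  exists X : 'M[C]_n, orthonormal_family X /\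
    z = \sum_(j < n) c 0 j * quadf A (row j X).

Definition supporting_line_at (c : 'rV[C]_n) (A : 'M[C]_n) (alpha u : C) : Prop :=
  `|u| = 1 /\ forall z, in_cnr c A z -> 'Re (Num.conj u * (z - alpha)) <= 0.

(* alpha is a boundary point of W_c(A) through which pass at least two
   distinct supporting lines (lines with unit normals u1, u2 coincide
   iff u1 = u2 or u1 = - u2). *)
Definition sharp_point (c : 'rV[C]_n) (A : 'M[C]_n) (alpha : C) : Prop :=
  in_cnr c A alpha /\
  exists u1 u2 : C, [/\ u1 != u2, u1 != - u2,
                       supporting_line_at c A alpha u1 &
                       supporting_line_at c A alpha u2].

(* c-value: sum_{s} c_{i_s} lambda_{j_s}, over the indices i with c_i != 0,
   j injective on those indices; lam = eigenvalues with algebraic multiplicity. *)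
Definition c_value (c : 'rV[C]_n) (A : 'M[C]_n) (alpha : C) : Prop :=
  exists lam : seq C,
    [/\ size lam = n,
        char_poly A = \prod_(l <- lam) ('X - l%:P) &
        exists j : 'I_n -> 'I_n,
          {in [pred i | c 0 i != 0] &, injective j} /\
          alpha = \sum_(i < n | c 0 i != 0) c 0 i * lam`_(j i)].

End CNR.

From HB Require Import structures.
From mathcomp Require Import all_boot all_order all_algebra perm.
From mathcomp Require Import ring.
Set Implicit Arguments. Unset Strict Implicit. Unset Printing Implicit Defensive.
Import Order.TTheory GRing.Theory Num.Theory.
Local Open Scope ring_scope.
Local Open Scope sesquilinear_scope.

(* Write alpha = tr (D B) with D = diag c and B = conj(X) A X^T for a unitary X.
   Conjugating B by a rotation in the (p, q) coordinate plane moves the value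
   along a curve in W_c(A) through alpha whose velocity is a real multiple of
   (c_q - c_p) (w B_pq + w^* B_qp), |w| = 1.  Every supporting line at alpha
   is tangent to this curve, and two non-parallel lines share no nonzero
   direction, so the velocity vanishes; w = 1 and w = i give B_pq = 0 whenever c_p <> c_q,
   i.e. D and B commute.  A simultaneous unitary triangularisation of D and B
   then writes alpha = sum_k c_(s k) lambda_k with s a permutation and the
   lambda_k the eigenvalues of A. *)

Section LinearCoefficient.
Context {R : numFieldType}.

Lemma linear_coef_eq0 (a K : R) (g : R -> R) :
  a \is Num.real -> `|a| <= K ->
  (forall t, t \is Num.real -> `|t| <= 1 -> g t \is Num.real /\ `|g t| <= K) ->
  (forall t, t \is Num.real -> t * a + t ^+ 2 * g t <= 0) -> a = 0.
Proof.
move=> aR aK gK hle; apply/eqP; apply: contraT => a0.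
have Kp : 0 < K by apply: lt_le_trans aK; rewrite normr_gt0.
(* With [t = a / 2K], [t a = a^2 / 2K] outweighs [t^2 |g t| <= a^2 / 4K]. *)
pose t := a / (2%:R * K).
have tR : t \is Num.real by rewrite rpred_div ?rpredM ?rpred_nat // gtr0_real.
have t1 : `|t| <= 1.
  rewrite normrM normfV normrM normr_nat (gtr0_norm Kp) ler_pdivrMr ?mulr_gt0 //.
  by rewrite mul1r (le_trans aK) // mulr_natl mulr2n lerDr ltW.
have [gR gtK] := gK t tR t1.
have Kg : 0 <= K + g t.
  by move: gtK; rewrite real_ler_norml // -lerBlDl sub0r => /andP[].
move: (hle t tR).
have -> : t * a + t ^+ 2 * g t = a ^+ 2 / (4%:R * K) + t ^+ 2 * (K + g t).
  by rewrite /t; field; rewrite gt_eqF //= pnatr_eq0.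
suff hpos : 0 < a ^+ 2 / (4%:R * K) + t ^+ 2 * (K + g t).
  by move=> /(lt_le_trans hpos); rewrite ltxx.
have t2 : 0 <= t ^+ 2 by rewrite -real_normK // exprn_ge0.
have a2 : 0 < a ^+ 2 by rewrite -real_normK // exprn_gt0 // normr_gt0.
apply: ltr_pwDl; first by rewrite divr_gt0 // mulr_gt0 // ltr0n.
by rewrite mulr_ge0.
Qed.

Lemma quartic_linear_coef_eq0 (r1 r2 r3 r4 : R) :
  r1 \is Num.real -> r2 \is Num.real -> r3 \is Num.real -> r4 \is Num.real ->
  (forall t, t \is Num.real ->
     t * r1 + t ^+ 2 * r2 + t ^+ 3 * r3 + t ^+ 4 * r4 <= 0) -> r1 = 0.
Proof.
move=> R1 R2 R3 R4 hle.
apply: (@linear_coef_eq0 _ (`|r1| + `|r2| + `|r3| + `|r4|)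
          (fun t => r2 + t * r3 + t ^+ 2 * r4)) => //.
- by rewrite -!addrA lerDl !addr_ge0.
- move=> t tR t1; split; first by rewrite !rpredD ?rpredM ?rpredX.
  have tr3 : `|t * r3| <= `|r3| by rewrite normrM ler_piMl.
  have tr4 : `|t ^+ 2 * r4| <= `|r4|.
    by rewrite normrM ler_piMl // normrX exprn_ile1.
  apply: (@le_trans _ _ (`|r2| + `|r3| + `|r4|));
    last by rewrite -!addrA ler_wpDl.
  apply: (le_trans (ler_normD _ _)); apply: lerD tr4.
  by apply: (le_trans (ler_normD _ _)); apply: lerD.
- move=> t tR /=; have := hle t tR; congr (_ <= 0); ring.
Qed.

End LinearCoefficient.

Section SupportingNormals.
Context {C : numClosedFieldType}.

Lemma Re_conjM_eq0 (u z : C) :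
  `|u| = 1 -> 'Re (u^* * z) = 0 -> z = - u ^+ 2 * z^*.
Proof.
move=> u1; rewrite ReE => /eqP; rewrite mulf_eq0 invr_eq0 pnatr_eq0 orbF.
rewrite rmorphM /= conjCK => /eqP uz.
have uu : u * u^* = 1 by rewrite -normCK u1 expr1n.
transitivity (u * (u^* * z)); first by rewrite mulrA uu mul1r.
have -> : u^* * z = - (u * z^*) by apply/eqP; rewrite -addr_eq0 uz.
ring.
Qed.

Lemma Re_conjM_eq0_nonparallel (u1 u2 z : C) :
  `|u1| = 1 -> `|u2| = 1 -> u1 != u2 -> u1 != - u2 ->
  'Re (u1^* * z) = 0 -> 'Re (u2^* * z) = 0 -> z = 0.
Proof.
move=> n1 n2 d12 dN12 /(Re_conjM_eq0 n1) e1 /(Re_conjM_eq0 n2) e2.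
have : (u1 - u2) * (u1 + u2) * z^* = 0.
  transitivity ((- u2 ^+ 2 * z^*) - (- u1 ^+ 2 * z^*)); first by ring.
  by rewrite -e1 -e2 subrr.
move/eqP; rewrite !mulf_eq0 subr_eq0 (negPf d12) addr_eq0 (negPf dN12) /=.
by rewrite conjC_eq0 => /eqP.
Qed.

End SupportingNormals.

Section PlaneRotation.
Context {C : numClosedFieldType} {n : nat}.
Variables (p q : 'I_n) (w : C).

Definition plane_proj : 'M[C]_n := delta_mx p p + delta_mx q q.
Definition plane_skew : 'M[C]_n := w *: delta_mx q p - w^* *: delta_mx p q.

(* With [(1 + y)^2 + x^2 = 1] this is the rotation of the (p, q) coordinate
   plane by the angle [theta] with [cos theta = 1 + y], [sin theta = x]. *)
Definition givens (x y : C) : 'M[C]_n := 1%:M + y *: plane_proj + x *: plane_skew.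

Lemma plane_proj_adj : plane_proj ^t* = plane_proj.
Proof.
by rewrite /plane_proj raddfD /= !trmx_delta map_mxD !map_delta_mx addrC.
Qed.

Lemma plane_skew_adj : plane_skew ^t* = - plane_skew.
Proof.
rewrite /plane_skew raddfB /= !linearZ /= !trmx_delta.
rewrite map_mxD !map_mxZ map_mxN !map_delta_mx /=.
by rewrite conjCK !scalerN opprD opprK addrC.
Qed.

Lemma givens_adj (x y : C) : x \is Num.real -> y \is Num.real ->
  (givens x y) ^t* = givens (- x) y.
Proof.
move=> xR yR.
have adj_comb (P Q : 'M[C]_n) :
    (1%:M + y *: P + x *: Q) ^t* = 1%:M + y *: P ^t* + x *: Q ^t*.
  apply/matrixP => i j; rewrite !mxE !rmorphD !rmorphM /= rmorphMn /= conjC1.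
  by rewrite (conj_Creal xR) (conj_Creal yR) eq_sym.
by rewrite adj_comb plane_proj_adj plane_skew_adj scalerN /givens scaleNr.
Qed.

Hypotheses (pq : p != q) (ww : w * w^* = 1).

Let dmE := mul_delta_mx_cond.
Let qp : q != p. Proof. by rewrite eq_sym. Qed.

Lemma plane_projM : plane_proj *m plane_proj = plane_proj.
Proof.
by rewrite mulmxDl !mulmxDr !dmE !eqxx (negPf pq) (negPf qp) !mulr0n !mulr1n
  addr0 add0r.
Qed.

Lemma plane_proj_skew : plane_proj *m plane_skew = plane_skew.
Proof.
rewrite mulmxDl !mulmxBr -!scalemxAr !dmE !eqxx (negPf pq) (negPf qp).
by rewrite !mulr0n !mulr1n !scaler0 subr0 sub0r addrC.
Qed.

Lemma plane_skew_proj : plane_skew *m plane_proj = plane_skew.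
Proof.
rewrite mulmxBl !mulmxDr -!scalemxAl !dmE !eqxx (negPf pq) (negPf qp).
by rewrite !mulr0n !mulr1n !scaler0 addr0 add0r.
Qed.

Lemma plane_skewM : plane_skew *m plane_skew = - plane_proj.
Proof.
rewrite mulmxBl !mulmxBr -!scalemxAl -!scalemxAr !dmE !eqxx.
rewrite (negPf pq) (negPf qp) !mulr0n !mulr1n !scaler0 !scalerA.
by rewrite [w^* * w]mulrC ww !scale1r sub0r subr0 opprD addrC.
Qed.

Lemma givens_unitary (x y : C) : x \is Num.real -> y \is Num.real ->
  (1 + y) ^+ 2 + x ^+ 2 = 1 -> givens x y \is unitarymx.
Proof.
move=> xR yR h; apply/unitarymxP; rewrite givens_adj //.
rewrite /givens !mulmxDl !mulmxDr !mul1mx !mulmx1 -!scalemxAl -!scalemxAr.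
rewrite plane_projM plane_proj_skew plane_skew_proj plane_skewM.
apply/matrixP => i j.
transitivity (((1 + y) ^+ 2 + x ^+ 2 - 1) * plane_proj i j + (i == j)%:R).
  by rewrite !mxE; ring.
by rewrite h subrr mul0r add0r mxE.
Qed.

End PlaneRotation.

Section TraceExpansion.
Context {C : numClosedFieldType} {n : nat}.
Implicit Types (B D P Q : 'M[C]_n) (c : 'rV[C]_n).

Lemma mxtrace_sandwich_expand D B P Q x y :
  \tr (D *m ((1%:M + y *: P + x *: Q) *m B *m (1%:M + y *: P - x *: Q))) =
  \tr (D *m B)
  + x * (\tr (D *m Q *m B) - \tr (D *m B *m Q))
  + y * (\tr (D *m P *m B) + \tr (D *m B *m P))
  + x ^+ 2 * (- \tr (D *m Q *m B *m Q))
  + x * y * (\tr (D *m Q *m B *m P) - \tr (D *m P *m B *m Q))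
  + y ^+ 2 * \tr (D *m P *m B *m P).
Proof.
rewrite -scaleNr; do ![rewrite mulmxDl | rewrite mulmxDr].
rewrite !mul1mx !mulmx1; do ![rewrite -scalemxAl | rewrite -scalemxAr].
by do ![rewrite mxtraceD | rewrite mxtraceZ]; rewrite !mulmxA; ring.
Qed.

Lemma mxtrace_diag_mul c B : \tr (diag_mx c *m B) = \sum_j c 0 j * B j j.
Proof. by rewrite mul_diag_mx /mxtrace; apply: eq_bigr => j _; rewrite mxE. Qed.

Lemma mxtrace_diag_delta_mul c B i j :
  \tr (diag_mx c *m delta_mx i j *m B) = c 0 i * B j i.
Proof.
rewrite -mulmxA mxtrace_diag_mul (bigD1 i) //= big1 => [|k ki].
  rewrite addr0 mxE (bigD1 j) //= big1 => [|l lj].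
    by rewrite !mxE !eqxx mul1r addr0.
  by rewrite !mxE (negPf lj) andbF mul0r.
by rewrite mxE big1 ?mulr0 // => l _; rewrite !mxE (negPf ki) mul0r.
Qed.

Lemma mxtrace_diag_mul_delta c B i j :
  \tr (diag_mx c *m B *m delta_mx i j) = c 0 j * B j i.
Proof.
rewrite -mulmxA mxtrace_diag_mul (bigD1 j) //= big1 => [|k kj].
  rewrite addr0 mxE (bigD1 i) //= big1 => [|l li].
    by rewrite !mxE !eqxx mulr1 addr0.
  by rewrite !mxE (negPf li) mulr0.
by rewrite mxE big1 ?mulr0 // => l _; rewrite !mxE (negPf kj) andbF mulr0.
Qed.

Lemma mxtrace_diag_skew_commutator c B (p q : 'I_n) (w : C) :
  \tr (diag_mx c *m plane_skew p q w *m B)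
    - \tr (diag_mx c *m B *m plane_skew p q w) =
  (c 0 q - c 0 p) * (w * B p q + w^* * B q p).
Proof.
rewrite /plane_skew -scaleNr mulmxDr mulmxDl !mulmxDr -!scalemxAr -!scalemxAl.
rewrite !mxtraceD !mxtraceZ !mxtrace_diag_delta_mul !mxtrace_diag_mul_delta.
ring.
Qed.

End TraceExpansion.

Section FirstOrder.
Context {C : numClosedFieldType} {n : nat}.

(* The rotation with [cos theta = (1 - t^2) / (1 + t^2)] and
   [sin theta = 2 t / (1 + t^2)] turns the value along the unitary orbit
   into a rational function of the real parameter [t], whose numerator has
   linear coefficient [2 (c_q - c_p) (w B_pq + w^* B_qp)]. *)
Lemma unitary_orbit_first_order_eq0 (c : 'rV[C]_n) (B : 'M[C]_n) (u : C)
    (p q : 'I_n) (w : C) :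
  p != q -> w * w^* = 1 ->
  (forall W, W \is unitarymx ->
     'Re (u^* * (\tr (diag_mx c *m (W *m B *m W ^t* ))
                 - \tr (diag_mx c *m B))) <= 0) ->
  'Re (u^* * ((c 0 q - c 0 p) * (w * B p q + w^* * B q p))) = 0.
Proof.
move=> pq ww hmax.
set D := diag_mx c; pose P : 'M[C]_n := plane_proj p q.
pose Q := plane_skew p q w.
rewrite -(mxtrace_diag_skew_commutator c B p q w) -/D -/Q.
set L1 := \tr (D *m Q *m B) - \tr (D *m B *m Q).
set L0 := \tr (D *m P *m B) + \tr (D *m B *m P).
set M11 := - \tr (D *m Q *m B *m Q).
set M10 := \tr (D *m Q *m B *m P) - \tr (D *m P *m B *m Q).
set M00 := \tr (D *m P *m B *m P).
suff : 'Re (u^* * (2%:R * L1)) = 0.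
  rewrite mulrCA (ReMl (rpred_nat _ 2)) => /eqP.
  by rewrite mulf_eq0 pnatr_eq0 => /eqP.
set k2 := - 2%:R * L0 + 4%:R * M11.
set k3 := 2%:R * L1 - 4%:R * M10.
set k4 := - 2%:R * L0 + 4%:R * M00.
apply: (@quartic_linear_coef_eq0 _ _ ('Re (u^* * k2)) ('Re (u^* * k3))
          ('Re (u^* * k4))); rewrite ?Creal_Re // => t tR.
pose s := 1 + t ^+ 2.
have s0 : s != 0 by rewrite gt_eqF // ltr_wpDr // -real_normK // exprn_ge0.
have sR : s \is Num.real by rewrite rpredD ?rpred1 ?rpredX.
pose x := 2%:R * t / s; pose y := - (2%:R * t ^+ 2) / s.
have xR : x \is Num.real by rewrite rpred_div ?rpredM ?rpred_nat.
have yR : y \is Num.real by rewrite rpred_div ?rpredN ?rpredM ?rpredX ?rpred_nat.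
have hxy : (1 + y) ^+ 2 + x ^+ 2 = 1 by rewrite /x /y /s; field.
have := hmax _ (givens_unitary pq ww xR yR hxy).
rewrite givens_adj // /givens scaleNr mxtrace_sandwich_expand -/P -/Q -/D.
rewrite -/L1 -/L0 -/M11 -/M10 -/M00 => hle.
have expandE : s ^+ 2 * (u^* * (\tr (D *m B) + x * L1 + y * L0 + x ^+ 2 * M11
      + x * y * M10 + y ^+ 2 * M00 - \tr (D *m B))) =
    t * (u^* * (2%:R * L1)) + t ^+ 2 * (u^* * k2)
    + t ^+ 3 * (u^* * k3) + t ^+ 4 * (u^* * k4).
  by rewrite /x /y /k2 /k3 /k4 /s; field.
rewrite -(ReMl tR) -!(ReMl (rpredX _ tR)) -!raddfD /= -expandE.
by rewrite (ReMl (rpredX _ sR)) mulr_ge0_le0 // -real_normK // exprn_ge0.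
Qed.

End FirstOrder.

Section SharpPoint.
Context {C : numClosedFieldType} {n : nat}.
Implicit Types (A X Y W : 'M[C]_n) (c : 'rV[C]_n).

Lemma quadf_row A Y j :
  quadf A (row j Y) = (map_mx Num.conj Y *m A *m Y^T) j j.
Proof.
rewrite /quadf !mxE; apply: eq_bigr => l _; rewrite !mxE; congr (_ * _).
by apply: eq_bigr => k _; rewrite !mxE.
Qed.

Lemma cnr_sum_trace c A Y :
  \sum_(j < n) c 0 j * quadf A (row j Y) =
  \tr (diag_mx c *m (map_mx Num.conj Y *m A *m Y^T)).
Proof. by rewrite mxtrace_diag_mul; apply: eq_bigr => j _; rewrite quadf_row. Qed.

Lemma in_cnr_unitary_conj c A X W : X \is unitarymx -> W \is unitarymx ->
  in_cnr c A
    (\tr (diag_mx c *m (W *m (map_mx Num.conj X *m A *m X^T) *m W ^t* ))).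
Proof.
move=> uX uW; exists (map_mx Num.conj W *m X); split.
  by rewrite /orthonormal_family mul_unitarymx // conjC_unitary.
have conjK : map_mx Num.conj (map_mx Num.conj W) = W.
  by apply/matrixP => i j; rewrite !mxE conjCK.
by rewrite cnr_sum_trace map_mxM conjK trmx_mul map_trmx !mulmxA.
Qed.

Lemma sharp_point_offdiag_eq0 c A X (alpha u1 u2 : C) (p q : 'I_n) :
  X \is unitarymx ->
  alpha = \tr (diag_mx c *m (map_mx Num.conj X *m A *m X^T)) ->
  u1 != u2 -> u1 != - u2 ->
  supporting_line_at c A alpha u1 -> supporting_line_at c A alpha u2 ->
  p != q -> c 0 p != c 0 q -> (map_mx Num.conj X *m A *m X^T) p q = 0.
Proof.
move=> uX ha d12 dN12 s1 s2 pq cpq.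
set B := map_mx Num.conj X *m A *m X^T.
have first_order (u w : C) : supporting_line_at c A alpha u -> w * w^* = 1 ->
    'Re (u^* * ((c 0 q - c 0 p) * (w * B p q + w^* * B q p))) = 0.
  move=> [_ hsup] ww; apply: unitary_orbit_first_order_eq0 pq ww _ => W uW.
  by rewrite -ha; apply/hsup/in_cnr_unitary_conj.
have dir0 (w : C) : w * w^* = 1 -> w * B p q + w^* * B q p = 0.
  move=> ww; have /eqP := Re_conjM_eq0_nonparallel s1.1 s2.1 d12 dN12
    (first_order _ _ s1 ww) (first_order _ _ s2 ww).
  by rewrite mulf_eq0 subr_eq0 eq_sym (negPf cpq) => /eqP.
have /dir0 e1 : (1 : C) * 1^* = 1 by rewrite conjC1 mulr1.
have /dir0 ei : 'i * 'i^* = 1 :> C by rewrite -normCK normCi expr1n.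
have : 2%:R * 'i * B p q = 0.
  transitivity ('i * (1 * B p q + 1^* * B q p) + ('i * B p q + 'i^* * B q p)).
    by rewrite conjC1 conjCi; ring.
  by rewrite e1 ei mulr0 addr0.
by move/eqP; rewrite !mulf_eq0 pnatr_eq0 (negPf (neq0Ci C)) /= => /eqP.
Qed.

Lemma sharp_point_diag_commute c A X (alpha : C) :
  X \is unitarymx ->
  alpha = \tr (diag_mx c *m (map_mx Num.conj X *m A *m X^T)) ->
  sharp_point c A alpha ->
  diag_mx c *m (map_mx Num.conj X *m A *m X^T) =
  (map_mx Num.conj X *m A *m X^T) *m diag_mx c.
Proof.
move=> uX ha [_ [u1 [u2 [d12 dN12 s1 s2]]]].
apply/matrixP => p q; rewrite mul_diag_mx mul_mx_diag [LHS]mxE [RHS]mxE.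
have [->|pq] := eqVneq p q; first by rewrite mulrC.
have [->|cpq] := eqVneq (c 0 p) (c 0 q); first by rewrite mulrC.
by rewrite (sharp_point_offdiag_eq0 uX ha d12 dN12 s1 s2 pq cpq) mulr0 mul0r.
Qed.

End SharpPoint.

Section CommutingDiagonal.
Context {C : numClosedFieldType} {n : nat}.
Implicit Types (M N P X A : 'M[C]_n) (c : 'rV[C]_n).

Lemma char_poly_unitary_conj P M : P \is unitarymx ->
  char_poly (P *m M *m P ^t* ) = char_poly M.
Proof.
move=> uP; rewrite -invmx_unitary // /char_poly /char_poly_mx.
set P' := map_mx polyC P; set Q' := map_mx polyC (invmx P).
have PQ : P' *m Q' = 1%:M by rewrite -map_mxM mulmxV ?unitarymx_unit // map_mx1.
have -> : 'X%:M - map_mx polyC (P *m M *m invmx P) =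
          P' *m ('X%:M - map_mx polyC M) *m Q'.
  rewrite !map_mxM -/P' -/Q' mulmxBr mulmxBl mul_mx_scalar -scalemxAl PQ.
  by rewrite scalemx1.
by rewrite !det_mulmx mulrC mulrA -det_mulmx (mulmx1C PQ) det1 mul1r.
Qed.

Lemma mxtrace_mul_trig M N : is_trig_mx M -> is_trig_mx N ->
  \tr (M *m N) = \sum_k M k k * N k k.
Proof.
move=> /is_trig_mxP hM /is_trig_mxP hN; apply: eq_bigr => k _.
rewrite mxE (bigD1 k) //= big1 ?addr0 // => l lk.
case: (ltngtP k l) => [kl|lk'|e]; first by rewrite hM ?mul0r.
  by rewrite hN ?mulr0.
by move: lk; rewrite -(inj_eq val_inj) /= e eqxx.
Qed.

Lemma trig_char_poly_diag_perm M c : is_trig_mx M ->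
  char_poly M = char_poly (diag_mx c) ->
  exists s : 'S_n, forall k, M k k = c 0 (s k).
Proof.
move=> tM; rewrite !char_poly_trig ?diag_mx_is_trig //.
have diagE k : diag_mx c k k = c 0 k by rewrite mxE eqxx mulr1n.
under [in RHS]eq_bigr => k _ do rewrite diagE.
have seqE (f : 'I_n -> C) : \prod_(k < n) ('X - (f k)%:P) =
    \prod_(x <- [seq f k | k <- enum 'I_n]) ('X - x%:P).
  by rewrite big_map big_enum.
rewrite (seqE (fun k => M k k)) (seqE (c 0)) => /prod_XsubC_eq.
have -> : [seq c 0 k | k <- enum 'I_n] = [tuple c 0 k | k < n] by [].
case/tuple_permP => s hs; exists s => k.
have := congr1 (fun r => nth 0 r k) hs.
rewrite /= (nth_map k) ?size_enum_ord // nth_ord_enum => ->.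
by rewrite (nth_map k) ?size_enum_ord // nth_ord_enum tnth_mktuple.
Qed.

Lemma char_poly_unitary_congr X A : X \is unitarymx ->
  char_poly (map_mx Num.conj X *m A *m X^T) = char_poly A.
Proof.
move=> uX; have -> : X^T = (map_mx Num.conj X)^t*.
  by apply/matrixP => i j; rewrite !mxE conjCK.
by rewrite char_poly_unitary_conj // conjC_unitary.
Qed.

Lemma commuting_diag_c_value c A B : char_poly B = char_poly A ->
  diag_mx c *m B = B *m diag_mx c -> c_value c A (\tr (diag_mx c *m B)).
Proof.
move=> cBA DB; have [P uP /andP[tD tB]] := cotrigonalization2 DB.
rewrite /similar_to /= !conjymx // in tD tB.
set D' := P *m diag_mx c *m P^t* in tD; set B' := P *m B *m P^t* in tB.
have trE : \tr (diag_mx c *m B) = \sum_k D' k k * B' k k.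
  rewrite -mxtrace_mul_trig //.
  have -> : D' *m B' = P *m (diag_mx c *m B) *m P^t*.
    by rewrite /D' /B' !mulmxA mulmxKtV.
  have PtP : P^t* *m P = 1%:M by rewrite -[P^t*]mul1mx mulmxKtV.
  by rewrite [RHS]mxtrace_mulC (mulmxA (P^t*) P) PtP mul1mx.
have [s Ds] : exists s : 'S_n, forall k, D' k k = c 0 (s k).
  by apply: trig_char_poly_diag_perm; rewrite // char_poly_unitary_conj.
exists [seq B' k k | k <- enum 'I_n]; split.
- by rewrite size_map size_enum_ord.
- rewrite -cBA -(char_poly_unitary_conj _ uP) char_poly_trig //.
  by rewrite big_map big_enum.
exists (s^-1)%g; split=> [i j _ _|]; first exact: perm_inj.
rewrite trE [RHS](reindex_inj (@perm_inj _ s)) /= [RHS]big_mkcond /=.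
apply: eq_bigr => k _.
rewrite permK (nth_map k) ?size_enum_ord // nth_ord_enum Ds.
by case: eqP => [->|_]; rewrite ?mul0r.
Qed.

End CommutingDiagonal.

Theorem mainTheorem16 (C : numClosedFieldType) (n : nat)
    (A : 'M[C]_n) (c : 'rV[C]_n) (hc : forall i, c 0 i \is Num.real)
    (alpha : C) :
  sharp_point c A alpha -> c_value c A alpha.
Proof.
move=> sharp; have [[X [uX ha]] _] := sharp; rewrite cnr_sum_trace in ha.
rewrite ha; apply: commuting_diag_c_value (char_poly_unitary_congr A uX) _.
exact: sharp_point_diag_commute uX ha sharp.
Qed.
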